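(* Let $P\subseteq\mathbb{R}^n$ be an $n$-dimensional lattice polytope with $\mathrm{cd}(P)>\lceil\frac{n+1}{2}\rceil$. Then through every vertex of $P$ there is an edge of $P$ whose only lattice points are its two vertices.
   Context: The codegree of $P$ is $\mathrm{cd}(P):=\min\{k\in\mathbb{Z}_{\ge1}:\mathrm{int}(kP)\cap\mathbb{Z}^n\neq\emptyset\}$. *)

From mathcomp Require Import all_boot all_order all_algebra.
From mathcomp Require Import reals.
Set Implicit Arguments.
Unset Strict Implicit.
Unset Printing Implicit Defensive.
Import Order.TTheory GRing.Theory Num.Theory.
Local Open Scope ring_scope.

Section PolytopeDefs.
Variables (R : realType) (n : nat).

Definition integral (x : 'rV[R]_n) : Prop := forall i, x ord0 i \is a Num.int.

Definition dotp (a x : 'rV[R]_n) : R := \sum_i a ord0 i * x ord0 i.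

Definition conv (V : seq 'rV[R]_n) (x : 'rV[R]_n) : Prop :=
  exists l : 'I_(size V) -> R,
    [/\ forall i, 0 <= l i, \sum_i l i = 1 & x = \sum_i l i *: V`_i].

(* P has (affine) dimension n: it contains n+1 affinely independent points
   x0, x0 + d_1, ..., x0 + d_n (the differences form a rank-n matrix). *)
Definition full_dim (P : 'rV[R]_n -> Prop) : Prop :=
  exists (x0 : 'rV[R]_n) (X : 'M[R]_n),
    [/\ P x0, forall i, P (row i X) & row_free (\matrix_(i < n) (row i X - x0))].

Definition dilate (k : nat) (P : 'rV[R]_n -> Prop) (y : 'rV[R]_n) : Prop :=
  exists x, P x /\ y = k%:R *: x.

(* topological interior in R^n (w.r.t. the sup-norm, i.e. the usual topology) *)
Definition interior_pt (A : 'rV[R]_n -> Prop) (x : 'rV[R]_n) : Prop :=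
  exists e : R, 0 < e /\
    forall y : 'rV[R]_n, (forall i, `|y ord0 i - x ord0 i| < e) -> A y.

Definition int_lattice_pt (P : 'rV[R]_n -> Prop) (k : nat) : Prop :=
  exists z, integral z /\ interior_pt (dilate k P) z.

Definition is_codegree (P : 'rV[R]_n -> Prop) (c : nat) : Prop :=
  [/\ (0 < c)%N, int_lattice_pt P c &
      forall k, (0 < k)%N -> (k < c)%N -> ~ int_lattice_pt P k].

Definition is_face (P F : 'rV[R]_n -> Prop) : Prop :=
  exists (a : 'rV[R]_n) (b : R),
    (forall x, P x -> dotp a x <= b) /\ (forall x, F x <-> (P x /\ dotp a x = b)).

Definition is_vertex (P : 'rV[R]_n -> Prop) (v : 'rV[R]_n) : Prop :=
  is_face P (fun x => x = v).

Definition segment (v w x : 'rV[R]_n) : Prop :=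
  exists t : R, 0 <= t <= 1 /\ x = (1 - t) *: v + t *: w.

Definition is_edge (P : 'rV[R]_n -> Prop) (v w : 'rV[R]_n) : Prop :=
  v != w /\ is_face P (segment v w).

End PolytopeDefs.

(* Suppose some vertex [v] of [P] lies on no lattice-free edge.  Then every edge
   [[v, w]] carries a lattice point besides its endpoints, hence a lattice vector
   [d = s (w - v)] with [v + 2 d] still on the edge.  The edge directions at a vertex
   span [R^n] (the tangent cone at [v] is generated by its extreme rays, which are
   found by separating the extreme points of the vertex figure), so [n] of these
   vectors [d_i] are linearly independent.  The simplex with vertices [v] and
   [v + 2 d_i] lies in [P], and when [n < 2 k] the lattice point [k v + sum_i d_i]
   is interior to [k] times this simplex.  Hence [cd(P) <= ceil((n + 1) / 2)]. *)

From mathcomp Require Import all_boot all_order all_algebra.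
From mathcomp Require Import reals.
From Stdlib Require Import Classical.
From mathcomp Require Import ring lra zify.
Set Implicit Arguments.
Unset Strict Implicit.
Unset Printing Implicit Defensive.
Import Order.TTheory GRing.Theory Num.Theory.
Local Open Scope ring_scope.

Lemma avg_eq_ub (R : realDomainType) (I : finType) (l f : I -> R) (b : R) :
  (forall i, 0 <= l i) -> \sum_i l i = 1 -> (forall i, f i <= b) ->
  \sum_i l i * f i = b -> forall i, l i != 0 -> f i = b.
Proof.
move=> l0 l1 fb lfb i li0.
have gap_eq0 : \sum_i l i * (b - f i) = 0.
  rewrite (eq_bigr (fun i => b * l i - l i * f i)); last by move=> j _; ring.
  by rewrite sumrB -mulr_sumr l1 mulr1 lfb subrr.
have gap_ge0 j : predT j -> 0 <= l j * (b - f j) by rewrite mulr_ge0 ?subr_ge0.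
move/eqP: (psumr_eq0P gap_ge0 gap_eq0 (i := i) isT).
by rewrite mulf_eq0 (negPf li0) subr_eq0 => /eqP.
Qed.

Lemma avg_le_ub (R : realDomainType) (I : finType) (l f : I -> R) (b : R) :
  (forall i, 0 <= l i) -> \sum_i l i = 1 -> (forall i, f i <= b) ->
  \sum_i l i * f i <= b.
Proof.
move=> l0 l1 fb; rewrite -[b]mul1r -l1 mulr_suml.
by apply: ler_sum => i _; rewrite ler_wpM2l.
Qed.

Lemma submx_scale_rows (F : fieldType) m n (A : 'M[F]_(m, n)) (s : 'I_m -> F) :
  (forall i, s i != 0) -> (A <= \matrix_i (s i *: row i A))%MS.
Proof.
move=> s_neq0.
rewrite {1}(_ : A = diag_mx (\row_i (s i)^-1) *m \matrix_i (s i *: row i A)).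
  exact: submxMl.
by apply/matrixP => i j; rewrite mul_diag_mx !mxE mulKf.
Qed.

Section DotProduct.
Variables (R : realType) (n : nat).
Implicit Types (x y : 'rV[R]_n) (a : R).

Lemma dotpDr y x1 x2 : dotp y (x1 + x2) = dotp y x1 + dotp y x2.
Proof. by rewrite /dotp -big_split; apply: eq_bigr => i _; rewrite mxE mulrDr. Qed.

Lemma dotpDl y1 y2 x : dotp (y1 + y2) x = dotp y1 x + dotp y2 x.
Proof. by rewrite /dotp -big_split; apply: eq_bigr => i _; rewrite mxE mulrDl. Qed.

Lemma dotpZr y a x : dotp y (a *: x) = a * dotp y x.
Proof. by rewrite /dotp mulr_sumr; apply: eq_bigr => i _; rewrite mxE mulrCA. Qed.

Lemma dotpZl y a x : dotp (a *: y) x = a * dotp y x.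
Proof. by rewrite /dotp mulr_sumr; apply: eq_bigr => i _; rewrite mxE mulrA. Qed.

Lemma dotp0r y : dotp y 0 = 0.
Proof. by rewrite /dotp big1 // => i _; rewrite mxE mulr0. Qed.

Lemma dotpNr y x : dotp y (- x) = - dotp y x.
Proof. by rewrite -scaleN1r dotpZr mulN1r. Qed.

Lemma dotpNl y x : dotp (- y) x = - dotp y x.
Proof. by rewrite -scaleN1r dotpZl mulN1r. Qed.

Lemma dotpBr y x1 x2 : dotp y (x1 - x2) = dotp y x1 - dotp y x2.
Proof. by rewrite dotpDr dotpNr. Qed.

Lemma dotpBl y1 y2 x : dotp (y1 - y2) x = dotp y1 x - dotp y2 x.
Proof. by rewrite dotpDl dotpNl. Qed.

Lemma dotp_sumr y (I : Type) (r : seq I) (P : pred I) (F : I -> 'rV[R]_n) :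
  dotp y (\sum_(i <- r | P i) F i) = \sum_(i <- r | P i) dotp y (F i).
Proof. exact: (big_morph (dotp y) (dotpDr y) (dotp0r y)). Qed.

Lemma dotp_self_gt0 x : x != 0 -> 0 < dotp x x.
Proof.
move=> x_neq0; have [i xi_neq0] : exists i, x ord0 i != 0.
  apply/existsP; apply: contraR x_neq0; rewrite negb_exists => /forallP x0.
  by apply/eqP/rowP => j; rewrite mxE; apply/eqP; move: (x0 j); rewrite negbK.
rewrite /dotp (bigD1 i) //= -expr2 ltr_wpDr ?exprn_even_gt0 //.
by apply: sumr_ge0 => j _; rewrite -expr2 sqr_ge0.
Qed.

End DotProduct.

Section ConvexHull.
Variables (R : realType) (n : nat).
Implicit Types (x y v w : 'rV[R]_n) (L : seq 'rV[R]_n).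

Lemma conv_convex_comb (I : finType) L (f : I -> 'rV[R]_n) (l : I -> R) :
  (forall i, 0 <= l i) -> \sum_i l i = 1 -> (forall i, conv L (f i)) ->
  conv L (\sum_i l i *: f i).
Proof.
move=> l0 l1 /fin_all_exists [lf lfP].
exists (fun k => \sum_i l i * lf i k); split.
- by move=> k; apply: sumr_ge0 => i _; apply: mulr_ge0 => //; case: (lfP i).
- rewrite exchange_big /= -[RHS]l1; apply: eq_bigr => i _.
  by rewrite -mulr_sumr; case: (lfP i) => _ -> _; rewrite mulr1.
- rewrite (eq_bigr (fun i => \sum_k (l i * lf i k) *: L`_k)); last first.
    move=> i _; case: (lfP i) => _ _ ->; rewrite scaler_sumr.
    by apply: eq_bigr => k _; rewrite scalerA.
  by rewrite exchange_big /=; apply: eq_bigr => k _; rewrite scaler_suml.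
Qed.

Lemma mem_conv L y : y \in L -> conv L y.
Proof.
move=> yL; have yi : (index y L < size L)%N by rewrite index_mem.
pose i0 : 'I_(size L) := Ordinal yi.
exists (fun i => (i == i0)%:R); split.
- by move=> i; rewrite ler0n.
- by rewrite (bigD1 i0) //= eqxx big1 ?addr0 // => i /negPf ->.
- rewrite (bigD1 i0) //= eqxx scale1r nth_index // big1 ?addr0 //.
  by move=> i /negPf ->; rewrite scale0r.
Qed.

Lemma conv_sub L1 L2 x : (forall y, y \in L2 -> conv L1 y) -> conv L2 x -> conv L1 x.
Proof.
by move=> L21 [l [l0 l1 ->]]; apply: conv_convex_comb => // i; apply/L21/mem_nth.
Qed.

Lemma conv_nil x : ~ conv [::] x.
Proof. by case=> l [_ + _]; rewrite big_ord0 => /eqP; rewrite eq_sym oner_eq0. Qed.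

Lemma conv1 y x : conv [:: y] x -> x = y.
Proof. by case=> l [_ + ->]; rewrite !big_ord1 => ->; rewrite scale1r. Qed.

Lemma segment_conv v w x : segment v w x <-> conv [:: v; w] x.
Proof.
split=> [[t [/andP [t0 t1] ->]]|[l [l0 l1 ->]]].
  exists (fun i : 'I_2 => if i == ord0 then 1 - t else t); split.
  - by move=> i; case: ifP; rewrite ?subr_ge0.
  - by rewrite !big_ord_recl big_ord0 /= addr0 subrK.
  - by rewrite !big_ord_recl big_ord0 /= addr0.
have lift_max : lift ord0 ord0 = ord_max :> 'I_2 by apply: val_inj.
exists (l ord_max); move: l1; rewrite !big_ord_recl !big_ord0 !addr0 lift_max /= => l1.
have -> : l ord0 = 1 - l ord_max by rewrite -l1 addrK.
by split=> //; rewrite l0 -l1 lerDr l0.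
Qed.

Lemma conv_segment L v w x : conv L v -> conv L w -> segment v w x -> conv L x.
Proof.
move=> Lv Lw /segment_conv; apply: conv_sub => y.
by rewrite !inE => /orP [] /eqP ->.
Qed.

Lemma conv_dotp_le L c b x :
  (forall y, y \in L -> dotp c y <= b) -> conv L x -> dotp c x <= b.
Proof.
move=> Lb [l [l0 l1 ->]]; rewrite dotp_sumr.
under eq_bigr do rewrite dotpZr.
by apply: avg_le_ub => // i; apply/Lb/mem_nth.
Qed.

Lemma conv_face_sub L L' c b x :
  (forall y, y \in L -> dotp c y <= b) ->
  (forall y, y \in L -> dotp c y = b -> conv L' y) ->
  conv L x -> dotp c x = b -> conv L' x.
Proof.
move=> Lb faceL' [l [l0 l1 ->]] xb.
have [i0 li0] : exists i0, l i0 != 0.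
  apply/existsP; apply: contraT; rewrite negb_exists => /forallP l_eq0.
  by move: l1; rewrite big1 => [/eqP|i _]; [rewrite eq_sym oner_eq0|apply/eqP/negPn].
have on_face i : l i != 0 -> dotp c L`_i = b.
  apply: (avg_eq_ub (f := fun j : 'I_(size L) => dotp c L`_j) l0 l1) => [j|].
    exact/Lb/mem_nth.
  by rewrite -xb dotp_sumr; apply: eq_bigr => j _; rewrite dotpZr.
pose f i := if l i == 0 then L`_i0 else L`_i.
have -> : \sum_i l i *: L`_i = \sum_i l i *: f i.
  by apply: eq_bigr => i _; rewrite /f; case: eqP => [->|]; rewrite ?scale0r.
apply: conv_convex_comb => // i; rewrite /f.
by case: eqP => [_|/eqP li]; apply: faceL'; rewrite ?mem_nth ?on_face.
Qed.

Lemma conv_sub_span L v m (M : 'M[R]_(m, n)) x :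
  (forall y, y \in L -> (y - v <= M)%MS) -> conv L x -> (x - v <= M)%MS.
Proof.
move=> LM [l [_ l1 ->]].
have -> : \sum_i l i *: L`_i - v = \sum_i l i *: (L`_i - v).
  under [RHS]eq_bigr do rewrite scalerBr.
  by rewrite sumrB -scaler_suml l1 scale1r.
by apply: summx_sub => i _; apply/scalemx_sub/LM/mem_nth.
Qed.

Lemma conv_comb_le1 L m p (q : 'I_m -> 'rV[R]_n) (u : 'I_m -> R) :
  conv L p -> (forall j, conv L (q j)) -> (forall j, 0 <= u j) ->
  \sum_j u j <= 1 -> conv L ((1 - \sum_j u j) *: p + \sum_j u j *: q j).
Proof.
move=> Lp Lq u0 u1.
pose l (i : 'I_m.+1) := if unlift ord0 i is Some j then u j else 1 - \sum_j u j.
pose f (i : 'I_m.+1) := if unlift ord0 i is Some j then q j else p.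
have l_lift j : l (lift ord0 j) = u j by rewrite /l liftK.
have f_lift j : f (lift ord0 j) = q j by rewrite /f liftK.
have -> : (1 - \sum_j u j) *: p + \sum_j u j *: q j = \sum_i l i *: f i.
  rewrite big_ord_recl; congr (_ + _); first by rewrite /l /f unlift_none.
  by apply: eq_bigr => j _; rewrite l_lift f_lift.
apply: conv_convex_comb => [i|| i].
- by rewrite /l; case: (unlift ord0 i) => [j|] //; rewrite subr_ge0.
- rewrite big_ord_recl (eq_bigr _ (fun j _ => l_lift j)) /l unlift_none.
  exact: subrK.
- by rewrite /f; case: (unlift ord0 i).
Qed.

End ConvexHull.

Section Farkas.
Variables (R : realType) (n : nat).
Implicit Types (x y b : 'rV[R]_n) (A : seq 'rV[R]_n).

Definition cone A b := exists l : nat -> R, (forall i, 0 <= l i) /\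
  b = \sum_(0 <= i < size A) l i *: A`_i.

Lemma cone_cons A a b t : cone A b -> 0 <= t -> cone (a :: A) (t *: a + b).
Proof.
move=> [l [l0 ->]] t0; exists (fun i => if i is i'.+1 then l i' else t).
by split=> [[]|] //; rewrite big_nat_recl.
Qed.

(* If the certificate [y] for the remaining generators fails on [a], project
   everything along [a] onto the hyperplane [dotp y x = 0] and recurse. *)
Lemma farkas A b : cone A b \/
  exists y, (forall x, x \in A -> 0 <= dotp y x) /\ dotp y b < 0.
Proof.
have [m] := ubnP (size A); elim: m A b => // m IH [|a A] b.
  move=> _; have [->|b_neq0] := eqVneq b 0.
    by left; exists (fun _ => 0); split => //; rewrite big_geq.
  by right; exists (- b); split => //; rewrite dotpNl oppr_lt0 dotp_self_gt0.
rewrite ltnS => sizeA; have [[l [l0 eb]]|[y [yA yb]]] := IH A b sizeA.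
  by left; rewrite -[b]add0r -(scale0r a); apply: cone_cons => //; exists l.
have [ya|ya] := leP 0 (dotp y a).
  by right; exists y; split => // x; rewrite in_cons => /orP [/eqP ->|/yA].
have ya_neq0 : dotp y a != 0 by rewrite lt_eqF.
pose f x := x - (dotp y x / dotp y a) *: a.
have := IH (map f A) (f b); rewrite size_map => /(_ sizeA) [[l [l0 efb]]|[y' [yA' yb']]].
  pose b' := \sum_(0 <= i < size A) l i *: A`_i.
  have fb' : f b = f b'.
    rewrite efb size_map /f /b' dotp_sumr mulr_suml scaler_suml -sumrB.
    apply: eq_big_nat => i /andP [_ hi]; rewrite (nth_map 0) //.
    by rewrite scalerBr dotpZr scalerA mulrA.
  have yb' : 0 <= dotp y b'.
    rewrite dotp_sumr big_nat_cond; apply: sumr_ge0 => i /andP [/andP [_ hi] _].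
    by rewrite dotpZr mulr_ge0 // yA // mem_nth.
  have t0 : 0 <= (dotp y b - dotp y b') / dotp y a.
    by rewrite mulr_le0 ?invr_le0 ?(ltW ya) // subr_le0 (le_trans (ltW yb)).
  have -> : b = (dotp y b - dotp y b') / dotp y a *: a + b'.
    rewrite mulrBl scalerBl -{1}(subrK ((dotp y b / dotp y a) *: a) b).
    by rewrite [_ - _]fb' /f [RHS]addrC addrA addrAC.
  by left; apply: cone_cons => //; exists l.
right; exists (y' - (dotp y' a / dotp y a) *: y).
have dotp_f x : dotp (y' - (dotp y' a / dotp y a) *: y) x = dotp y' (f x).
  rewrite dotpBl dotpZl /f dotpBr dotpZr; ring.
split=> [x|]; last by rewrite dotp_f.
rewrite in_cons dotp_f => /orP [/eqP ->|xA]; last exact/yA'/map_f.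
by rewrite /f divff // scale1r subrr dotp0r.
Qed.

End Farkas.

Section Separation.
Variables (R : realType) (n : nat).
Implicit Types (x y p : 'rV[R]_n) (L : seq 'rV[R]_n).

Definition homog x : 'rV[R]_(n + 1) := row_mx x (const_mx 1).

Lemma dotp_homog (y : 'rV[R]_(n + 1)) x :
  dotp y (homog x) = dotp (lsubmx y) x + rsubmx y 0 0.
Proof.
rewrite -{1}(hsubmxK y) /homog /dotp big_split_ord /= big_ord1 !row_mxEr.
congr (_ + _); last by rewrite /const_mx mxE mulr1.
by apply/eq_bigr => i _; rewrite !row_mxEl.
Qed.

(* Farkas' lemma applied to the homogenized points [(x, 1)]. *)
Lemma conv_separation L p : ~ conv L p ->
  exists c, forall q, q \in L -> dotp c q < dotp c p.
Proof.
move=> Lp; have [[l [l0 el]]|[y [yL yp]]] := farkas (map homog L) (homog p).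
  exfalso; apply: Lp; exists (fun i : 'I_(size L) => l i); split => //.
  - move: el => /(congr1 rsubmx) /rowP /(_ 0).
    rewrite /homog row_mxKr mxE size_map big_mkord linear_sum summxE => ->.
    by apply: eq_bigr => i _; rewrite (nth_map 0) // mxE mxE row_mxEr mxE mulr1.
  - move: el => /(congr1 lsubmx); rewrite /homog row_mxKl size_map big_mkord => ->.
    rewrite linear_sum; apply: eq_bigr => i _.
    by rewrite (nth_map 0) // linearZ /= row_mxKl.
exists (- lsubmx y) => q qL.
have := yL _ (map_f homog qL); move: yp; rewrite !dotp_homog !dotpNl; lra.
Qed.

End Separation.

Section Irredundant.
Variables (R : realType) (n : nat).
Implicit Types (x y e : 'rV[R]_n) (Q E : seq 'rV[R]_n).

Definition irredundant E := forall e, e \in E -> ~ conv [seq y <- E | y != e] e.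

Lemma irredundant_subgenerators E Q :
  {subset E <= Q} -> (forall x, x \in Q -> conv E x) ->
  exists E', [/\ {subset E' <= Q}, forall x, x \in Q -> conv E' x & irredundant E'].
Proof.
have [m] := ubnP (size E); elim: m E => // m IH E sizeE EQ QE.
have [[e [eE Ee]]|] := classic (exists e, e \in E /\ conv [seq y <- E | y != e] e);
  last by move=> Eirr; exists E; split=> // e eE Ee; apply: Eirr; exists e.
apply: (IH [seq y <- E | y != e]).
- rewrite -ltnS (leq_trans _ sizeE) // ltnS size_filter.
  rewrite -(count_predC (pred1 e) E) addnC -ltn_subLR ?subnn //.
  by rewrite -has_count has_pred1.
- by move=> x; rewrite mem_filter => /andP [_ /EQ].
- move=> x /QE; apply: conv_sub => y yE.
  have [->|y_neq_e] := eqVneq y e; first exact: Ee.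
  by apply: mem_conv; rewrite mem_filter y_neq_e.
Qed.

Lemma irredundant_separation E Q e :
  (forall x, x \in Q -> conv E x) -> irredundant E -> e \in E ->
  exists c, forall x, x \in Q -> x != e -> dotp c x < dotp c e.
Proof.
move=> QE Eirr eE; have [c ce] := conv_separation (Eirr e eE).
have E_le y : y \in E -> dotp c y <= dotp c e.
  have [->//|y_neq_e yE] := eqVneq y e.
  by apply/ltW/ce; rewrite mem_filter y_neq_e.
exists c => x xQ x_neq_e; rewrite lt_neqAle (conv_dotp_le E_le (QE x xQ)) andbT.
apply: contra x_neq_e => /eqP xe; apply/eqP/conv1.
apply: (conv_face_sub E_le _ (QE x xQ) xe) => y yE ye.
have [->|y_neq_e] := eqVneq y e; first by apply: mem_conv; rewrite mem_head.
by move: (ce y); rewrite mem_filter y_neq_e yE ye ltxx => /(_ isT).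
Qed.

End Irredundant.

Lemma seq_argmin d (O : orderType d) (T : eqType) (s : seq T) (F : T -> O) :
  s != [::] -> exists2 x, x \in s & forall y, y \in s -> (F x <= F y)%O.
Proof.
elim: s => // a [|b s] IH _.
  by exists a => [|y]; rewrite ?mem_seq1 // => /eqP ->.
have [x xs x_min] := IH isT.
have [Fax|Fxa] := leP (F a) (F x).
  exists a => [|y]; first exact: mem_head.
  by rewrite in_cons => /orP [/eqP ->//|/x_min]; apply: le_trans.
exists x => [|y]; first by rewrite in_cons xs orbT.
by rewrite in_cons => /orP [/eqP ->|/x_min//]; apply: ltW.
Qed.

Section Faces.
Variables (R : realType) (n : nat).
Implicit Types (x y u v w : 'rV[R]_n) (V : seq 'rV[R]_n).

Lemma segment_scale v w x (s : R) :
  0 <= s <= 1 -> x - v = s *: (w - v) -> segment v w x.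
Proof.
move=> s01 /eqP; rewrite subr_eq => /eqP ->; exists s; split=> //.
by rewrite scalerBr scalerBl scale1r [LHS]addrAC [RHS]addrC addrA.
Qed.

Lemma vertex_mem_support V v : is_vertex (conv V) v ->
  v \in V /\ exists a, forall u, u \in V -> u != v -> dotp a u < dotp a v.
Proof.
move=> [a [b [Vb face_v]]]; have [vV av] := (face_v v).1 erefl.
have a_max u : u \in V -> u != v -> dotp a u < dotp a v.
  move=> uV; apply: contraNlt => ua; apply/eqP/face_v; split; first exact: mem_conv.
  by apply/eqP; rewrite -av eq_le ua andbT av; apply/Vb/mem_conv.
split; last by exists a.
apply: contraT => vV'; exfalso; apply: (@conv_nil _ _ v).
apply: (conv_face_sub _ _ vV av) => [u uV|u uV ub]; first exact/Vb/mem_conv.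
by have u_v := (face_v u).2 (conj (mem_conv uV) ub); rewrite -u_v uV in vV'.
Qed.

Lemma segment_face V v w c :
  v \in V -> w \in V -> (forall u, u \in V -> dotp c u <= dotp c v) ->
  dotp c w = dotp c v -> (forall u, u \in V -> dotp c u = dotp c v -> segment v w u) ->
  is_face (conv V) (segment v w).
Proof.
move=> vV wV c_max cw V_seg; exists c, (dotp c v); split => [x|x].
  exact: conv_dotp_le.
split=> [vwx|[Vx cx]].
  split; first exact: conv_segment (mem_conv vV) (mem_conv wV) vwx.
  by case: vwx => t [_ ->]; rewrite dotpDr !dotpZr cw; ring.
apply/segment_conv; apply: (conv_face_sub c_max _ Vx cx) => u uV cu.
exact/segment_conv/V_seg.
Qed.

End Faces.

Section VertexFigure.
Variables (R : realType) (n : nat) (V : seq 'rV[R]_n) (v a : 'rV[R]_n).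
Hypothesis vV : v \in V.
Hypothesis a_max : forall u, u \in V -> u != v -> dotp a u < dotp a v.
Implicit Types (x y u w e : 'rV[R]_n).

Definition depth u := dotp a v - dotp a u.

(* Radial projection from [v] onto the hyperplane [dotp a x = dotp a v - 1]. *)
Definition vproj u := v + (depth u)^-1 *: (u - v).

Definition vertex_figure := map vproj [seq u <- V | u != v].

Lemma depth_gt0 u : u \in V -> u != v -> 0 < depth u.
Proof. by move=> uV u_neq_v; rewrite subr_gt0 a_max. Qed.

Lemma vprojP u : u \in V -> u != v -> u - v = depth u *: (vproj u - v).
Proof.
move=> uV u_neq_v; rewrite /vproj (addrC v) addrK scalerA divff ?scale1r //.
by rewrite gt_eqF ?depth_gt0.
Qed.

Lemma dotp_vproj u : u \in V -> u != v -> dotp a (vproj u) = dotp a v - 1.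
Proof.
move=> uV u_neq_v; have := depth_gt0 uV u_neq_v.
rewrite /vproj dotpDr dotpZr dotpBr /depth => d_gt0.
by field; rewrite gt_eqF.
Qed.

(* [w] is the point of [V] on the ray from [v] through [e] farthest from [v]; the
   functional [c] tilts [c'] by a multiple of [a] so that it is maximal on [V]
   exactly along that ray. *)
Lemma edge_towards e c' : e \in vertex_figure ->
  (forall x, x \in vertex_figure -> x != e -> dotp c' x < dotp c' e) ->
  exists w, [/\ w \in V, w != v, exists s : R, e - v = s *: (w - v) &
                is_face (conv V) (segment v w)].
Proof.
move=> eQ e_max; have [u0 u0U e_u0] := mapP eQ.
pose W := [seq u <- V | (u != v) && (vproj u == e)].
have u0W : u0 \in W.
  by move: u0U; rewrite !mem_filter -e_u0 eqxx andbT => /andP [-> ->].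
have W_neq0 : W != [::] by apply: contraTneq u0W => ->.
have [w wW w_min] := seq_argmin (dotp a) W_neq0.
move: wW; rewrite mem_filter => /andP [/andP [w_neq_v /eqP e_w] wV].
pose c := c' + (dotp c' e - dotp c' v) *: a.
have c_gap u : u \in V -> u != v ->
    dotp c u - dotp c v = depth u * (dotp c' (vproj u) - dotp c' e).
  move=> uV u_neq_v; rewrite -dotpBr (vprojP uV u_neq_v) dotpZr; congr (_ * _).
  by rewrite /c dotpBr !dotpDl !dotpZl (dotp_vproj uV u_neq_v); ring.
have c_max u : u \in V -> dotp c u <= dotp c v.
  move=> uV; have [->//|u_neq_v] := eqVneq u v.
  rewrite -subr_le0 c_gap // mulr_ge0_le0 ?(ltW (depth_gt0 uV u_neq_v)) // subr_le0.
  have [->//|pu_neq_e] := eqVneq (vproj u) e.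
  by apply/ltW/e_max => //; apply: map_f; rewrite mem_filter u_neq_v.
have c_eq u : u \in V -> u != v -> dotp c u = dotp c v -> vproj u = e.
  move=> uV u_neq_v /eqP; rewrite -subr_eq0 c_gap // mulf_eq0.
  rewrite gt_eqF ?depth_gt0 //= subr_eq0; have [//|pu_neq_e] := eqVneq (vproj u) e.
  by rewrite lt_eqF // e_max // map_f // mem_filter u_neq_v.
have dw := depth_gt0 wV w_neq_v.
have w_seg u : u \in V -> dotp c u = dotp c v -> segment v w u.
  move=> uV cu; have [->|u_neq_v] := eqVneq u v.
    by apply: (segment_scale (s := 0)); rewrite ?lexx ?ler01 // subrr scale0r.
  have e_u := c_eq u uV u_neq_v cu.
  apply: (segment_scale (s := depth u / depth w)).
    have du := depth_gt0 uV u_neq_v.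
    rewrite divr_ge0 ?(ltW du) ?(ltW dw) //= ler_pdivrMr // mul1r /depth lerD2l lerN2.
    by rewrite w_min // mem_filter u_neq_v e_u eqxx uV.
  by rewrite (vprojP uV u_neq_v) (vprojP wV w_neq_v) e_u e_w scalerA divfK ?gt_eqF.
exists w; split => //.
  exists (depth w)^-1.
  by rewrite (vprojP wV w_neq_v) e_w scalerA mulVf ?gt_eqF ?scale1r.
apply: (segment_face vV wV c_max _ w_seg).
by apply/eqP; rewrite -subr_eq0 c_gap // e_w subrr mulr0.
Qed.

End VertexFigure.

Lemma vertex_edges_span (R : realType) (n : nat) (V : seq 'rV[R]_n) v :
  is_vertex (conv V) v ->
  exists m (w : 'I_m -> 'rV[R]_n),
    (forall j, w j \in V /\ is_edge (conv V) v (w j)) /\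
    forall x, conv V x -> (x - v <= \matrix_j (w j - v))%MS.
Proof.
move=> /vertex_mem_support [vV [a a_max]].
have [E [EQ QE Eirr]] := irredundant_subgenerators
  (fun x (xQ : x \in vertex_figure V v a) => xQ) (fun x xQ => mem_conv xQ).
have edge (j : 'I_(size E)) : exists w,
    [/\ w \in V, is_edge (conv V) v w & exists s : R, E`_j - v = s *: (w - v)].
  have eE := mem_nth 0 (ltn_ord j).
  have [c' c'_max] := irredundant_separation QE Eirr eE.
  have [w [wV w_neq_v e_w w_face]] := edge_towards vV a_max (EQ _ eE) c'_max.
  by exists w; split=> //; split; rewrite 1?eq_sym.
have [w wP] := fin_all_exists edge.
exists (size E), w; split=> [j|x Vx]; first by case: (wP j).
have E_span e : e \in E -> (e - v <= \matrix_j (w j - v))%MS.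
  move=> eE; have eE' : (index e E < size E)%N by rewrite index_mem.
  have [_ _ [s]] := wP (Ordinal eE'); rewrite /= nth_index // => ->.
  by apply: scalemx_sub; rewrite -(rowK (fun j => w j - v)); apply: row_sub.
apply: (conv_sub_span _ Vx) => u uV; have [->|u_neq_v] := eqVneq u v.
  by rewrite subrr sub0mx.
have uQ : vproj v a u \in vertex_figure V v a by rewrite map_f // mem_filter u_neq_v.
by rewrite (vprojP a_max uV u_neq_v); apply/scalemx_sub/(conv_sub_span E_span)/QE.
Qed.

Section Lattice.
Variables (R : realType) (n : nat).
Implicit Types (x y z v w : 'rV[R]_n) (L : seq 'rV[R]_n).

Lemma integralB x y : integral x -> integral y -> integral (x - y).
Proof. by move=> ix iy j; rewrite !mxE; apply: rpredB. Qed.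

(* A lattice point [z] strictly inside [[v, w]] splits it into two lattice segments;
   doubling the shorter one from [v] stays inside [[v, w]]. *)
Lemma segment_lattice_step L v w :
  conv L v -> conv L w -> integral v -> integral w ->
  ~ (forall z, integral z -> segment v w z -> z = v \/ z = w) ->
  exists s : R,
    [/\ s != 0, integral (s *: (w - v)) & conv L (v + 2%:R *: (s *: (w - v)))].
Proof.
move=> Lv Lw iv iw /not_all_ex_not [z /[dup] /not_imply_elim iz /not_imply_elim2].
move=> /[dup] /not_imply_elim [t [/andP [t0 t1] ez]] /not_imply_elim2 z_not_end.
have z_v : z - v = t *: (w - v) by rewrite ez; apply/rowP => i; rewrite !mxE; ring.
have w_z : w - z = (1 - t) *: (w - v) by rewrite ez; apply/rowP => i; rewrite !mxE; ring.
have double s : 0 <= s -> s <= 2^-1 -> conv L (v + 2%:R *: (s *: (w - v))).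
  move=> s0 s_half; apply: (conv_segment Lv Lw); apply: (segment_scale (s := 2%:R * s)).
    by rewrite mulr_ge0 //= -ler_pdivlMl ?ltr0n // mulr1.
  by rewrite addrC addKr scalerA.
have [t_half|t_half] := leP t 2^-1.
  exists t; split; [|by rewrite -z_v; apply: integralB | exact: double].
  apply/eqP => t_eq0; apply: z_not_end; left.
  by apply/eqP; rewrite -subr_eq0 z_v t_eq0 scale0r.
exists (1 - t); split; [|by rewrite -w_z; apply: integralB | apply: double; lra].
apply/eqP => t_eq1; apply: z_not_end; right.
by apply/eqP; rewrite -subr_eq0 -opprB oppr_eq0 w_z t_eq1 scale0r.
Qed.

Lemma full_dim_row_full (P : 'rV[R]_n -> Prop) v m (G : 'M[R]_(m, n)) :
  full_dim P -> (forall x, P x -> (x - v <= G)%MS) -> row_full G.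
Proof.
case=> x0 [X [Px0 PX X_free]] PG.
have XG : (\matrix_(i < n) (row i X - x0) <= G)%MS.
  apply/row_subP => i; rewrite rowK.
  have -> : row i X - x0 = (row i X - v) + (-1) *: (x0 - v).
    by rewrite scaleN1r opprB addrA subrK.
  by apply: addmx_sub; [apply: PG | apply/scalemx_sub/PG].
by rewrite /row_full eqn_leq rank_leq_col -{1}(eqP X_free) mxrankS.
Qed.

Lemma mulmx_near0 m (M : 'M[R]_(n, m)) : exists2 e : R, 0 < e &
  forall d : 'rV[R]_n, (forall i, `|d 0 i| < e) -> \sum_j `|(d *m M) 0 j| < 1.
Proof.
pose S := \sum_j \sum_i `|M i j|.
have S_ge0 : 0 <= S by apply: sumr_ge0 => j _; apply: sumr_ge0.
have S1_gt0 : 0 < 1 + S by rewrite ltr_pwDl.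
exists (1 + S)^-1 => [|d d_small]; first by rewrite invr_gt0.
have coord j : `|(d *m M) 0 j| <= (1 + S)^-1 * \sum_i `|M i j|.
  rewrite mxE mulr_sumr; apply: (le_trans (ler_norm_sum _ _ _)); apply: ler_sum => i _.
  by rewrite normrM ler_wpM2r // ltW.
apply: (le_lt_trans (ler_sum _ (fun j _ => coord j))).
rewrite -mulr_sumr -/S mulrC ltr_pdivrMr // mul1r; lra.
Qed.

(* The lattice point [k v + sum_i D_i] is the image under [x |-> k x] of an interior
   point of the simplex with vertices [v] and [v + 2 D_i], because [n < 2 k]. *)
Lemma lattice_simplex_int_pt V v (D : 'M[R]_n) k :
  conv V v -> integral v -> D \in unitmx -> (forall i, integral (row i D)) ->
  (forall i, conv V (v + 2%:R *: row i D)) -> (0 < k)%N -> (n < 2 * k)%N ->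
  int_lattice_pt (conv V) k.
Proof.
move=> Vv iv D_unit iD VD k_gt0 nk.
pose z := k%:R *: v + \sum_i row i D.
exists z; split.
  move=> j; rewrite /z !mxE summxE; apply: rpredD; first by rewrite rpredM ?natr_int.
  by apply: rpred_sum => i _; have := iD i j; rewrite mxE.
have [e e_gt0 e_small] := mulmx_near0 (invmx D).
exists e; split => // y yz.
pose t := (y - z) *m invmx D.
have t_small : \sum_j `|t 0 j| < 1.
  by apply: e_small => i; move: (yz i); rewrite !mxE.
have t_lt1 j : `|t 0 j| < 1.
  by apply: le_lt_trans t_small; rewrite (bigD1 j) //= lerDl sumr_ge0.
have k_neq0 : (k%:R : R) != 0 by rewrite pnatr_eq0 -lt0n.
have k2_gt0 : (0 : R) < (2 * k)%:R by rewrite ltr0n muln_gt0.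
pose u j := (1 + t 0 j) / (2 * k)%:R.
have u_ge0 j : 0 <= u j.
  by rewrite divr_ge0 ?(ltW k2_gt0) //; move: (t_lt1 j); rewrite ltr_norml; lra.
have u_le1 : \sum_j u j <= 1.
  rewrite -mulr_suml big_split /= sumr_const card_ord ler_pdivrMr // mul1r.
  have t_le : \sum_j t 0 j <= \sum_j `|t 0 j| by apply: ler_sum => j _; apply: ler_norm.
  have : ((n.+1)%:R : R) <= (2 * k)%:R by rewrite ler_nat.
  rewrite -addn1 natrD -[X in X + _]mulr_natr mul1r; lra.
have ey : y = k%:R *: v + \sum_j (1 + t 0 j) *: row j D.
  rewrite -[y](subrK z) -[y - z](mulmxKV D_unit) -/t mulmx_sum_row /z addrCA.
  rewrite -big_split; congr (_ + _); apply: eq_bigr => j _.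
  by rewrite scalerDl scale1r addrC.
exists (k%:R^-1 *: y); split; last by rewrite scalerA divff // scale1r.
suff -> : k%:R^-1 *: y = (1 - \sum_j u j) *: v + \sum_j u j *: (v + 2%:R *: row j D).
  exact: conv_comb_le1.
rewrite ey scalerDr scalerA mulVf // scale1r scaler_sumr.
rewrite [in RHS](eq_bigr (fun j => u j *: v + u j *: (2%:R *: row j D))); last first.
  by move=> j _; rewrite scalerDr.
rewrite big_split /= -scaler_suml addrA -scalerDl subrK scale1r; congr (_ + _).
apply: eq_bigr => j _; rewrite !scalerA; congr (_ *: _).
by rewrite /u natrM; field.
Qed.

End Lattice.

Unset Implicit Arguments.
Set Strict Implicit.

Theorem lemma3p3 (R : realType) (n : nat) (V : seq 'rV[R]_n) :
  (forall x, x \in V -> integral x) ->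
  full_dim (conv V) ->
  (exists c, is_codegree (conv V) c /\ (n.+2 %/ 2 < c)%N) ->
  forall v, is_vertex (conv V) v ->
  exists w, is_edge (conv V) v w /\
    (forall z, integral z -> segment v w z -> z = v \/ z = w).
Proof.
move=> V_int V_full [c [[_ _ c_min] c_gt]] v v_vert.
have [vV _] := vertex_mem_support v_vert.
have [m [w [w_edge V_span]]] := vertex_edges_span v_vert.
apply: NNPP => no_free_edge.
have step j : exists s : R,
    [/\ s != 0, integral (s *: (w j - v)) & conv V (v + 2%:R *: (s *: (w j - v)))].
  have [wV wj_edge] := w_edge j.
  apply: (segment_lattice_step (mem_conv vV) (mem_conv wV) (V_int _ vV) (V_int _ wV)).
  by move=> wj_free; apply: no_free_edge; exists (w j); split.
have [s sP] := fin_all_exists step.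
pose G := \matrix_j (s j *: row j (\matrix_j (w j - v))).
have G_span x : conv V x -> (x - v <= G)%MS.
  move=> Vx; apply: submx_trans (V_span x Vx) (submx_scale_rows _ _).
  by move=> j; case: (sP j).
have G_full := full_dim_row_full V_full G_span.
pose f := fullrankfun G_full.
have k_gt0 : (0 < n.+2 %/ 2)%N by lia.
apply: (c_min _ k_gt0 c_gt).
apply: (lattice_simplex_int_pt (D := rowsub f G) (mem_conv vV) (V_int _ vV)
  (fullrowsub_unit G_full)); try lia.
all: by move=> i; rewrite row_rowsub !rowK; case: (sP (f i)).
Qed.
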